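(* For every finite configuration $F\subseteq\mathbb{R}^d$ there is a real $\varepsilon>0$ such that for all functions $\rho,\sigma\colon F\to F$ the following holds: if there is a real $q$ with $$\Big|\,q\|f'-f''\|^2-\big(\rho(f')-\rho(f'')\big)\cdot\big(\sigma(f')-\sigma(f'')\big)\Big|\leq\varepsilon\quad\text{for all } f',f''\in F,$$ then there is a real $\overline{q}$ with $$\overline{q}\|f'-f''\|^2=\big(\rho(f')-\rho(f'')\big)\cdot\big(\sigma(f')-\sigma(f'')\big)\quad\text{for all } f',f''\in F.$$
   Context: $\|\cdot\|$ is the Euclidean norm on $\mathbb{R}^d$ and $x\cdot y$ is the standard scalar product. *)

From mathcomp Require Import all_boot all_order all_algebra.
From mathcomp Require Import finmap.
From mathcomp Require Import reals.
Set Implicit Arguments. Unset Strict Implicit. Unset Printing Implicit Defensive.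
Import Order.TTheory GRing.Theory Num.Theory.
Local Open Scope ring_scope.

Definition dotv (R : realType) (d : nat) (x y : 'rV[R]_d) : R :=
  \sum_(i < d) x 0 i * y 0 i.

Definition enorm (R : realType) (d : nat) (x : 'rV[R]_d) : R :=
  Num.sqrt (dotv x x).

From mathcomp Require Import all_boot all_order all_algebra.
From mathcomp Require Import finmap.
From mathcomp Require Import reals.
From mathcomp Require Import lra.
Import Order.TTheory GRing.Theory Num.Theory.
Local Open Scope ring_scope.
Local Open Scope fset_scope.

(* Over all choices of two points of F and of their images under rho and
   sigma, the ratio (rho f' - rho f'').(sigma f' - sigma f'') / |f' - f''|^2
   takes only finitely many values, so distinct values are at least some
   delta > 0 apart, and nonzero squared distances are at least some m > 0.
   With eps = delta m / 3 the hypothesis puts every ratio realized by rho and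
   sigma within delta / 3 of q, so all of them coincide; their common value is
   qbar (on the diagonal f' = f'' both sides vanish). *)

Section FiniteRatios.
Context {R : realFieldType}.

Lemma fin_pos_lbound {I : finType} (P : pred I) (u : I -> R) :
  (forall i, P i -> 0 < u i) -> exists2 m, 0 < m & forall i, P i -> m <= u i.
Proof.
move=> u_gt0; exists (\big[Order.min/1]_(i | P i) u i).
  by elim/big_ind: _ => [|x y x_gt0 y_gt0|i /u_gt0] //; rewrite lt_min x_gt0.
by move=> i Pi; rewrite bigmin_le_cond.
Qed.

Lemma fin_discrete {I : finType} (r : I -> R) :
  exists2 delta, 0 < delta & forall i j, `|r i - r j| < delta -> r i = r j.
Proof.
have [delta delta_gt0 le_delta] : exists2 delta, 0 < delta &
    forall p : I * I, r p.1 != r p.2 -> delta <= `|r p.1 - r p.2|.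
  by apply: fin_pos_lbound => p ne_r; rewrite normr_gt0 subr_eq0.
exists delta => // i j; apply: contraTeq => ne_rij.
by rewrite -leNgt (le_delta (i, j)).
Qed.

Lemma approx_ratios_eq {I : finType} (N D : I -> R) :
  exists2 eps, 0 < eps & forall (J : Type) (c : J -> I) (q : R),
    (forall j, `|q * N (c j) - D (c j)| <= eps) ->
    forall j k, N (c j) != 0 -> N (c k) != 0 ->
      D (c j) / N (c j) = D (c k) / N (c k).
Proof.
have [delta delta_gt0 discrete] := fin_discrete (fun i : I => D i / N i).
have [m m_gt0 le_m] : exists2 m, 0 < m & forall i, N i != 0 -> m <= `|N i|.
  by apply: fin_pos_lbound => i; rewrite normr_gt0.
exists (delta * m / 3) => [|J c q approx j k Nj0 Nk0].
  by rewrite divr_gt0 ?mulr_gt0.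
have close i : N i != 0 -> `|q * N i - D i| <= delta * m / 3 ->
    `|q - D i / N i| <= delta / 3.
  move=> Ni0 le_eps; rewrite -(ler_pM2r m_gt0) mulrAC; apply: le_trans le_eps.
  have -> : q * N i - D i = (q - D i / N i) * N i by rewrite mulrBl divfK.
  by rewrite normrM ler_wpM2l ?le_m.
apply: discrete; apply: le_lt_trans (ler_distD q _ _) _; rewrite distrC.
have := close _ Nj0 (approx j); have := close _ Nk0 (approx k); lra.
Qed.

Lemma common_ratio {J : finType} (N D : J -> R) :
  (forall j, N j = 0 -> D j = 0) ->
  (forall j k, N j != 0 -> N k != 0 -> D j / N j = D k / N k) ->
  exists qbar, forall j, qbar * N j = D j.
Proof.
move=> D0 ratio_eq; case: (pickP [pred j | N j != 0]) => [j0 Nj0 | N0].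
  exists (D j0 / N j0) => j; have [Nj_eq0 | Nj] := eqVneq (N j) 0.
    by rewrite Nj_eq0 mulr0 D0.
  by rewrite (ratio_eq j0 j) // divfK.
by exists 0 => j; rewrite mul0r D0 //; have /negbFE/eqP := N0 j.
Qed.

End FiniteRatios.

Section EuclideanSpace.
Variables (R : realType) (d : nat).
Implicit Types x y : 'rV[R]_d.

Lemma dotv0l y : dotv 0 y = 0.
Proof. by rewrite /dotv big1 // => i _; rewrite mxE mul0r. Qed.

Lemma dotv_ge0 x : 0 <= dotv x x.
Proof. by apply: sumr_ge0 => i _; rewrite -expr2 sqr_ge0. Qed.

Lemma enorm_eq0 x : enorm x = 0 -> x = 0.
Proof.
move/eqP; rewrite sqrtr_eq0 => dot_le0.
have dot0 : dotv x x = 0 by apply/le_anti; rewrite dot_le0 dotv_ge0.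
apply/rowP => i; rewrite mxE; apply/eqP; rewrite -[_ == 0]orbb -mulf_eq0.
by apply/eqP; apply: (psumr_eq0P _ dot0) => // k _; rewrite -expr2 sqr_ge0.
Qed.

End EuclideanSpace.

Theorem lemma2p1 (R : realType) (d : nat) (F : {fset 'rV[R]_d}) :
  exists eps : R, 0 < eps /\
    forall rho sigma : F -> F,
      (exists q : R, forall f1 f2 : F,
          `| q * enorm (val f1 - val f2) ^+ 2
             - dotv (val (rho f1) - val (rho f2)) (val (sigma f1) - val (sigma f2)) |
          <= eps) ->
      exists qbar : R, forall f1 f2 : F,
        qbar * enorm (val f1 - val f2) ^+ 2
        = dotv (val (rho f1) - val (rho f2)) (val (sigma f1) - val (sigma f2)).
Proof.
pose I := (F * F * (F * F) * (F * F))%type.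
pose N (i : I) : R := let: (f1, f2, _, _) := i in enorm (val f1 - val f2) ^+ 2.
pose D (i : I) : R :=
  let: (_, _, (r1, r2), (s1, s2)) := i in
  dotv (val r1 - val r2) (val s1 - val s2).
have [eps eps_gt0 ratios_eq] := approx_ratios_eq N D.
exists eps; split => // rho sigma [q approx].
pose c (p : F * F) : I := (p.1, p.2, (rho p.1, rho p.2), (sigma p.1, sigma p.2)).
have diag0 (p : F * F) : N (c p) = 0 -> D (c p) = 0.
  case: p => f1 f2 /eqP /=; rewrite sqrf_eq0 => /eqP /enorm_eq0 /eqP.
  by rewrite subr_eq0 => /eqP /val_inj ->; rewrite !subrr dotv0l.
have [|qbar qbar_ratio] :=
  common_ratio (N \o c) (D \o c) diag0 (ratios_eq _ c q _).
  by case=> f1 f2; exact: approx.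
by exists qbar => f1 f2; exact: (qbar_ratio (f1, f2)).
Qed.
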